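(* Let $V$ be a finite-dimensional vector space over a field $\mathbb{F}$ with fixed basis $e_1,\dots,e_n$, and let $N(t)$ be a nonsingular $\mathbb{F}(t)$-linear map $V(t)\to V(t)$. If $L$ and $L'$ are subspaces of $\bigwedge V$ such that $x\wedge x'=0$ for all $x\in L$, $x'\in L'$, then also $y\wedge y'=0$ for all $y\in NL$, $y'\in NL'$.
   Context: $\mathbb{F}(t)$ is the field of rational functions in a transcendental $t$; $V(t)=V\otimes_{\mathbb{F}}\mathbb{F}(t)$, and $N(t)$ extends to $\bigwedge V(t)$ by $u_1\wedge\cdots\wedge u_r\mapsto N(t)u_1\wedge\cdots\wedge N(t)u_r$ and linearity. $\bigwedge V$ is given the basis of monomials $e_{s_1}\wedge\cdots\wedge e_{s_r}$, $s_1<\cdots<s_r$. Limit action: for nonzero $x\in\bigwedge V$, write $N(t)x$ in the monomial basis, multiply by a nonzero element of $\mathbb{F}(t)$ so that all coefficients are polynomials in $t$ with no common divisor of positive $t$-degree, and evaluate at $t=0$; the result is a nonzero element $Nx$ of $\bigwedge V$, well defined up to nonzero scalar. For a subspace $L$, $NL$ is the subspace spanned by $\{Nx:x\in L\setminus\{0\}\}$ (equivalently, the limit of $L$ as a point of the appropriate Grassmannian); it has the same dimension as $L$. *)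

From HB Require Import structures.
From mathcomp Require Import all_boot all_order all_algebra fraction.
Set Implicit Arguments. Unset Strict Implicit. Unset Printing Implicit Defensive.
Import Order.TTheory GRing.Theory Num.Theory.
Local Open Scope ring_scope.

(* V = R^n with basis e_0, ..., e_{n-1}; the exterior algebra /\ V is
   represented in its monomial basis: e_S (S a subset of 'I_n) is the
   wedge e_{s_1} /\ ... /\ e_{s_r} with s_1 < ... < s_r. *)
Definition lam (R : Type) (n : nat) := {ffun {set 'I_n} -> R}.

Definition inv_count n (S T : {set 'I_n}) : nat :=
  #|[set p : 'I_n * 'I_n | [&& p.1 \in S, p.2 \in T & (p.2 < p.1)%N]]|.

Definition wedge (R : pzRingType) n (x y : lam R n) : lam R n :=
  [ffun U => \sum_(S : {set 'I_n}) \sum_(T : {set 'I_n} | (S :&: T == set0) && (S :|: T == U))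
      (-1) ^+ inv_count S T * x S * y T].

Definition lam_one (R : pzRingType) n : lam R n := [ffun S => (S == set0)%:R].

Definition embed (R : pzRingType) n (v : 'I_n -> R) : lam R n :=
  [ffun S => \sum_(i : 'I_n | S == [set i]) v i].

Notation ratfun F := {fraction {poly F}}.
Notation topoly F p := (@FracField.tofrac {poly F} p).

(* action of a linear map N on /\ V(t): the monomial e_S is sent to
   N e_{s_1} /\ ... /\ N e_{s_r}, extended linearly;  N e_j = sum_i N i j e_i *)
Definition extN (K : pzRingType) n (N : 'M[K]_n) (x : lam K n) : lam K n :=
  [ffun U => \sum_(S : {set 'I_n})
     x S * (foldr (@wedge K n) (lam_one K n)
                 [seq embed (fun i => N i j) | j <- enum S]) U].

(* z is (a representative of) the limit N x: write N(t) x in the monomial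
   basis, multiply by a nonzero c in F(t) so that the coefficients are
   polynomials p_S with no common divisor of positive degree, and evaluate
   at t = 0. *)
Definition limit_of (F : fieldType) n (N : 'M[ratfun F]_n) (x z : lam F n) : Prop :=
  let y := extN N [ffun S => topoly F (x S)%:P] in
  exists c : ratfun F, c != 0 /\
    exists p : {ffun {set 'I_n} -> {poly F}},
      (forall S, c * y S = topoly F (p S)) /\
      (forall d : {poly F}, (forall S, d %| p S) -> (size d <= 1)%N) /\
      z = [ffun S => (p S).[0]].

Definition is_subspace (F : fieldType) n (L : lam F n -> Prop) : Prop :=
  L 0 /\ forall (a : F) (x y : lam F n), L x -> L y -> L ([ffun S => a * x S] + y).

Definition in_span (F : fieldType) n (P : lam F n -> Prop) (y : lam F n) : Prop :=
  exists s : seq (F * lam F n), (forall q, q \in s -> P q.2) /\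
    y = \sum_(q <- s) [ffun S => q.1 * q.2 S].

Definition lim_gens (F : fieldType) n (N : 'M[ratfun F]_n) (L : lam F n -> Prop)
  (z : lam F n) : Prop :=
  exists x, [/\ L x, x != 0 & limit_of N x z].

Definition lim_space (F : fieldType) n (N : 'M[ratfun F]_n) (L : lam F n -> Prop) :
  lam F n -> Prop := in_span (lim_gens N L).

From HB Require Import structures.
From mathcomp Require Import all_boot all_order all_algebra fraction.
From mathcomp Require Import ring.
Set Implicit Arguments. Unset Strict Implicit. Unset Printing Implicit Defensive.
Import Order.TTheory GRing.Theory Num.Theory.
Local Open Scope ring_scope.

(* The extension of N(t) to the exterior algebra is multiplicative: it sends
   e_S to the product of the vectors N(t) e_s, s in S, and these anticommute
   and square to zero, so the relation e_S /\ e_T = +-e_{S u T} is preserved.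
   Hence N(t) x /\ N(t) x' = N(t) (x /\ x') = 0.  The wedge product commutes
   with ring morphisms, so the polynomial vectors p = c N(t) x, p' = c' N(t) x'
   obtained by clearing denominators satisfy p /\ p' = 0 (as F[t] -> F(t) is
   injective), and evaluating at t = 0 gives N x /\ N x' = 0.  Bilinearity
   extends this to the spans N L and N L'. *)

Section Wedge.
Variables (K : comNzRingType) (n : nat).
Implicit Types (S T U W A B C : {set 'I_n}) (x y z : lam K n).

Definition lam_scale (a : K) x : lam K n := [ffun S => a * x S].

Definition wedge_sign S T : K := if S :&: T == set0 then (-1) ^+ inv_count S T else 0.

Lemma wedgeE x y U :
  wedge x y U = \sum_S \sum_T wedge_sign S T * x S * y T * (S :|: T == U)%:R.
Proof.
rewrite ffunE; apply: eq_bigr => S _; rewrite big_mkcond /=; apply: eq_bigr => T _.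
rewrite /wedge_sign; case: (S :&: T == set0); case: (S :|: T == U) => /=;
  by rewrite ?mulr1 ?mulr0 ?mul0r.
Qed.

Lemma sum_delta (F : {set 'I_n} -> K) B : \sum_A F A * (A == B)%:R = F B.
Proof.
rewrite (bigD1 B) //= eqxx mulr1 big1 ?addr0 // => A /negbTE ->; by rewrite mulr0.
Qed.

Lemma sum_delta_sym (F : {set 'I_n} -> K) B : \sum_A F A * (B == A)%:R = F B.
Proof. under eq_bigr do rewrite eq_sym. exact: sum_delta. Qed.

Lemma inv_countE S T : inv_count S T =
  (\sum_(p : 'I_n * 'I_n) [&& p.1 \in S, p.2 \in T & (p.2 < p.1)%N])%N.
Proof. by rewrite /inv_count -sum1dep_card big_mkcond. Qed.

Lemma inv_countUl A B C : A :&: B = set0 ->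
  inv_count (A :|: B) C = (inv_count A C + inv_count B C)%N.
Proof.
move=> dAB; rewrite !inv_countE -big_split; apply: eq_bigr => p _ /=.
have : p.1 \notin A :&: B by rewrite dAB in_set0.
rewrite in_setI in_setU.
by case: (p.1 \in A); case: (p.1 \in B); case: (p.2 \in C); case: (p.2 < p.1)%N.
Qed.

Lemma inv_countUr A B C : B :&: C = set0 ->
  inv_count A (B :|: C) = (inv_count A B + inv_count A C)%N.
Proof.
move=> dBC; rewrite !inv_countE -big_split; apply: eq_bigr => p _ /=.
have : p.2 \notin B :&: C by rewrite dBC in_set0.
rewrite in_setI in_setU.
by case: (p.1 \in A); case: (p.2 \in B); case: (p.2 \in C); case: (p.2 < p.1)%N.
Qed.

Lemma wedge_signUl A B C : A :&: B = set0 ->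
  wedge_sign (A :|: B) C = wedge_sign A C * wedge_sign B C.
Proof.
move=> dAB; rewrite /wedge_sign setIUl setU_eq0.
case: (A :&: C == set0); case: (B :&: C == set0); rewrite /= ?mulr0 ?mul0r //.
by rewrite inv_countUl // exprD.
Qed.

Lemma wedge_signUr A B C : B :&: C = set0 ->
  wedge_sign A (B :|: C) = wedge_sign A B * wedge_sign A C.
Proof.
move=> dBC; rewrite /wedge_sign setIUr setU_eq0.
case: (A :&: B == set0); case: (A :&: C == set0); rewrite /= ?mulr0 ?mul0r //.
by rewrite inv_countUr // exprD.
Qed.

Lemma wedge_sign_cocycle A B C :
  wedge_sign A B * wedge_sign (A :|: B) C = wedge_sign B C * wedge_sign A (B :|: C).
Proof.
case eAB: (A :&: B == set0); last first.
  by rewrite /wedge_sign eAB setIUr setU_eq0 eAB /= mul0r mulr0.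
case eBC: (B :&: C == set0); last first.
  by rewrite /wedge_sign eBC setIUl setU_eq0 eBC andbF /= mul0r mulr0.
by rewrite wedge_signUl ?wedge_signUr; [ring | exact/eqP | exact/eqP].
Qed.

Lemma wedge_sign0l T : wedge_sign set0 T = 1.
Proof. by rewrite /wedge_sign set0I eqxx inv_countE big1 // => p; rewrite in_set0. Qed.

Lemma wedge_sign0r T : wedge_sign T set0 = 1.
Proof.
by rewrite /wedge_sign setI0 eqxx inv_countE big1 // => p; rewrite in_set0 andbF.
Qed.

Lemma inv_count_set1 (i j : 'I_n) : inv_count [set i] [set j] = (j < i)%N.
Proof.
rewrite inv_countE (bigD1 (i, j)) //= !in_set1 !eqxx big1 ?addn0 // => -[a b] /=.
by rewrite !in_set1 xpair_eqE; case: eqP; case: eqP.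
Qed.

Lemma wedge_sign_set1 (i j : 'I_n) :
  wedge_sign [set i] [set j] = if i == j then 0 else if (j < i)%N then -1 else 1.
Proof.
rewrite /wedge_sign inv_count_set1; case: (eqVneq i j) => [->|ne].
  by rewrite setIid; case: ifP => // /eqP /setP /(_ j); rewrite !inE eqxx.
have -> : [set i] :&: [set j] == set0.
  by apply/eqP/setP => k; rewrite !inE; case: (eqVneq k i) => // ->; rewrite (negbTE ne).
by case: (j < i)%N; rewrite ?expr1 ?expr0.
Qed.

Lemma wedge_sign_set1C (i j : 'I_n) :
  wedge_sign [set j] [set i] = - wedge_sign [set i] [set j].
Proof.
rewrite !wedge_sign_set1 eq_sym; case: (eqVneq i j) => [_|ne]; first by rewrite oppr0.
case: ltngtP => h; rewrite ?opprK //.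
by move: ne; rewrite -val_eqE /= h eqxx.
Qed.

Lemma wedge_sign_set1_lt (i : 'I_n) A :
  (forall a, a \in A -> (i < a)%N) -> wedge_sign [set i] A = 1.
Proof.
move=> iA; rewrite /wedge_sign.
have -> : [set i] :&: A == set0.
  apply/eqP/setP => k; rewrite !inE; case: eqP => // -> /=.
  by apply/negP => /iA; rewrite ltnn.
rewrite inv_countE big1 // => -[a b] _ /=; rewrite in_set1.
by case: eqP => //= ->; case bA: (b \in A) => //=; rewrite ltnNge ltnW // iA.
Qed.

Lemma lam_scaleE a x S : lam_scale a x S = a * x S. Proof. by rewrite ffunE. Qed.
Lemma lam_scale1 x : lam_scale 1 x = x.
Proof. by apply/ffunP => S; rewrite lam_scaleE mul1r. Qed.
Lemma lam_scale0 x : lam_scale 0 x = 0.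
Proof. by apply/ffunP => S; rewrite lam_scaleE mul0r ffunE. Qed.
Lemma lam_scaler0 a : lam_scale a 0 = 0.
Proof. by apply/ffunP => S; rewrite lam_scaleE !ffunE mulr0. Qed.
Lemma lam_scaleA a b x : lam_scale a (lam_scale b x) = lam_scale (a * b) x.
Proof. by apply/ffunP => S; rewrite !lam_scaleE mulrA. Qed.
Lemma lam_scaleN a x : - lam_scale a x = lam_scale (- a) x.
Proof. by apply/ffunP => S; rewrite ffunE !lam_scaleE mulNr. Qed.

Lemma wedgeDl x x' y : wedge (x + x') y = wedge x y + wedge x' y.
Proof.
apply/ffunP => U; rewrite [RHS]ffunE !wedgeE -big_split; apply: eq_bigr => S _.
by rewrite -big_split; apply: eq_bigr => T _ /=; rewrite ffunE; ring.
Qed.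

Lemma wedgeDr x y y' : wedge x (y + y') = wedge x y + wedge x y'.
Proof.
apply/ffunP => U; rewrite [RHS]ffunE !wedgeE -big_split; apply: eq_bigr => S _.
by rewrite -big_split; apply: eq_bigr => T _ /=; rewrite ffunE; ring.
Qed.

Lemma wedgeNl x y : wedge (- x) y = - wedge x y.
Proof.
apply/ffunP => U; rewrite [RHS]ffunE !wedgeE -sumrN; apply: eq_bigr => S _.
by rewrite -sumrN; apply: eq_bigr => T _ /=; rewrite ffunE; ring.
Qed.

Lemma wedgeZl a x y : wedge (lam_scale a x) y = lam_scale a (wedge x y).
Proof.
apply/ffunP => U; rewrite lam_scaleE !wedgeE mulr_sumr; apply: eq_bigr => S _.
by rewrite mulr_sumr; apply: eq_bigr => T _; rewrite lam_scaleE; ring.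
Qed.

Lemma wedgeZr a x y : wedge x (lam_scale a y) = lam_scale a (wedge x y).
Proof.
apply/ffunP => U; rewrite lam_scaleE !wedgeE mulr_sumr; apply: eq_bigr => S _.
by rewrite mulr_sumr; apply: eq_bigr => T _; rewrite lam_scaleE; ring.
Qed.

Lemma wedge0l y : wedge 0 y = 0.
Proof. by have := wedgeZl 0 0 y; rewrite !lam_scale0. Qed.

Lemma wedge0r x : wedge x 0 = 0.
Proof. by have := wedgeZr 0 x 0; rewrite !lam_scale0. Qed.

Lemma wedge_suml (I : Type) (r : seq I) (P : pred I) (F : I -> lam K n) y :
  wedge (\sum_(i <- r | P i) F i) y = \sum_(i <- r | P i) wedge (F i) y.
Proof.
exact: (big_morph (fun x => wedge x y) (fun x x' => wedgeDl x x' y) (wedge0l y)).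
Qed.

Lemma wedge_sumr (I : Type) (r : seq I) (P : pred I) (F : I -> lam K n) x :
  wedge x (\sum_(i <- r | P i) F i) = \sum_(i <- r | P i) wedge x (F i).
Proof. exact: (big_morph (wedge x) (wedgeDr x) (wedge0r x)). Qed.

Lemma wedge1l x : wedge (lam_one K n) x = x.
Proof.
apply/ffunP => U; rewrite wedgeE (bigD1 set0) //= [X in _ + X]big1 ?addr0.
  rewrite -[RHS](sum_delta x); apply: eq_bigr => T _.
  by rewrite wedge_sign0l ffunE eqxx set0U mulr1n !mul1r.
by move=> S /negbTE nS; apply: big1 => T _; rewrite ffunE nS mulr0 !mul0r.
Qed.

Lemma wedge_wedgelE x y z U : wedge (wedge x y) z U =
  \sum_S \sum_T \sum_W wedge_sign S T * wedge_sign (S :|: T) W * x S * y T * z W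
       * (S :|: T :|: W == U)%:R.
Proof.
rewrite wedgeE.
transitivity (\sum_A \sum_W \sum_S \sum_T (wedge_sign S T * x S * y T *
   (wedge_sign A W * z W * (A :|: W == U)%:R)) * (S :|: T == A)%:R).
  apply: eq_bigr => A _; apply: eq_bigr => W _.
  rewrite wedgeE mulr_sumr !mulr_suml; apply: eq_bigr => S _.
  by rewrite mulr_sumr !mulr_suml; apply: eq_bigr => T _; ring.
under eq_bigr do rewrite exchange_big.
under eq_bigr do under eq_bigr do rewrite exchange_big.
rewrite exchange_big; under eq_bigr do rewrite exchange_big.
under eq_bigr do under eq_bigr do rewrite exchange_big.
apply: eq_bigr => S _; apply: eq_bigr => T _; apply: eq_bigr => W _.
by rewrite sum_delta_sym; ring.
Qed.

Lemma wedge_wedgerE x y z U : wedge x (wedge y z) U =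
  \sum_S \sum_T \sum_W wedge_sign T W * wedge_sign S (T :|: W) * x S * y T * z W
       * (S :|: (T :|: W) == U)%:R.
Proof.
rewrite wedgeE.
transitivity (\sum_S \sum_B \sum_T \sum_W (wedge_sign T W * y T * z W *
   (wedge_sign S B * x S * (S :|: B == U)%:R)) * (T :|: W == B)%:R).
  apply: eq_bigr => S _; apply: eq_bigr => B _.
  rewrite wedgeE mulr_sumr mulr_suml; apply: eq_bigr => T _.
  by rewrite mulr_sumr mulr_suml; apply: eq_bigr => W _; ring.
apply: eq_bigr => S _; rewrite exchange_big; apply: eq_bigr => T _.
rewrite exchange_big; apply: eq_bigr => W _.
by rewrite sum_delta_sym; ring.
Qed.

Lemma wedgeA x y z : wedge (wedge x y) z = wedge x (wedge y z).
Proof.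
apply/ffunP => U; rewrite wedge_wedgelE wedge_wedgerE; apply: eq_bigr => S _.
apply: eq_bigr => T _; apply: eq_bigr => W _.
by rewrite wedge_sign_cocycle setUA.
Qed.

End Wedge.

Arguments wedge_sign {K n} S T.

Section Embed.
Variables (K : comNzRingType) (n : nat).
Implicit Types (u v : 'I_n -> K).

Lemma embedE v S : embed v S = \sum_i v i * (S == [set i])%:R.
Proof.
rewrite ffunE big_mkcond /=; apply: eq_bigr => i _.
by case: (S == [set i]); rewrite ?mulr1 ?mulr0.
Qed.

Lemma wedge_embedE u v U : wedge (embed u) (embed v) U =
  \sum_i \sum_j u i * v j * wedge_sign [set i] [set j] * ([set i] :|: [set j] == U)%:R.
Proof.
rewrite wedgeE.
transitivity (\sum_S \sum_T \sum_i \sum_j ((u i * v j * wedge_sign S T *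
   (S :|: T == U)%:R) * (S == [set i])%:R) * (T == [set j])%:R).
  apply: eq_bigr => S _; apply: eq_bigr => T _.
  rewrite !embedE -[wedge_sign S T * _ * _]mulrA big_distrlr /= mulr_sumr mulr_suml.
  apply: eq_bigr => i _.
  by rewrite mulr_sumr mulr_suml; apply: eq_bigr => j _; ring.
under eq_bigr do rewrite exchange_big.
under eq_bigr do under eq_bigr do rewrite exchange_big.
rewrite exchange_big; apply: eq_bigr => i _.
rewrite exchange_big; apply: eq_bigr => j _.
under eq_bigr do rewrite sum_delta.
by rewrite sum_delta.
Qed.

Lemma sum_antisym_eq0 (f : 'I_n -> 'I_n -> K) :
  (forall i j, f j i = - f i j) -> (forall i, f i i = 0) -> \sum_i \sum_j f i j = 0.
Proof.
move=> fC f0.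
pose g (i j : 'I_n) := if (i < j)%N then f i j else 0.
have fg i j : f i j = g i j - g j i.
  rewrite /g; case: ltngtP => [_|_|/val_inj ->]; first by rewrite subr0.
    by rewrite fC sub0r.
  by rewrite f0 subrr.
under eq_bigr do under eq_bigr do rewrite fg.
under eq_bigr do rewrite sumrB.
by rewrite sumrB [X in _ - X]exchange_big subrr.
Qed.

Lemma wedge_embedC u v : wedge (embed u) (embed v) = - wedge (embed v) (embed u).
Proof.
apply/ffunP => U; rewrite [RHS]ffunE !wedge_embedE exchange_big -sumrN.
apply: eq_bigr => i _; rewrite -sumrN; apply: eq_bigr => j _.
by rewrite wedge_sign_set1C setUC; ring.
Qed.

Lemma wedge_embed_self v : wedge (embed v) (embed v) = 0.
Proof.
apply/ffunP => U; rewrite [RHS]ffunE wedge_embedE; apply: sum_antisym_eq0 => [i j|i].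
  by rewrite wedge_sign_set1C setUC; ring.
by rewrite wedge_sign_set1 eqxx; ring.
Qed.

End Embed.

Lemma enum_set_sorted n (A : {set 'I_n}) : sorted (fun a b : 'I_n => (a < b)%N) (enum A).
Proof.
rewrite -deprecated_filter_index_enum.
apply: sorted_filter; first by move=> a b c; apply: ltn_trans.
rewrite -[index_enum _]filter_predT deprecated_filter_index_enum.
by have := iota_ltn_sorted 0 n; rewrite -val_enum_ord sorted_map.
Qed.

Lemma enum_setU1_lt n (s : 'I_n) (A : {set 'I_n}) :
  (forall t, t \in A -> (s < t)%N) -> enum (s |: A) = s :: enum A.
Proof.
move=> sA.
have ltn_trans' : transitive (fun a b : 'I_n => (a < b)%N).
  by move=> a b c; apply: ltn_trans.
apply: (irr_sorted_eq ltn_trans') => [a|||t].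
- by rewrite /= ltnn.
- by rewrite enum_set_sorted.
- rewrite /= path_sortedE // enum_set_sorted andbT.
  by apply/allP => t; rewrite mem_enum; apply: sA.
- by rewrite inE !mem_enum in_setU1.
Qed.

Lemma set_ord_min_ind n (P : {set 'I_n} -> Prop) :
  P set0 ->
  (forall (s : 'I_n) (A : {set 'I_n}),
     (forall t, t \in A -> (s < t)%N) -> P A -> P (s |: A)) ->
  forall A, P A.
Proof.
move=> P0 PU A; have [m] := ubnP #|A|; elim: m A => // m IH A.
have [->|[a aA]] := set_0Vmem A; first by [].
case: (arg_minnP (fun j : 'I_n => val j) aA) => s sA smin.
have {}sA : s \in A by [].
rewrite (cardsD1 s) sA add1n ltnS => cA.
rewrite -(setD1K sA); apply: PU (IH _ cA) => t; rewrite in_setD1 => /andP[ts tA].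
by rewrite ltn_neqAle smin // andbT; apply: contra ts => /eqP/val_inj->.
Qed.

Section WedgeProduct.
Variables (K : comNzRingType) (n : nat) (v : 'I_n -> lam K n).
Hypothesis wedge_vC : forall i j, wedge (v i) (v j) = - wedge (v j) (v i).
Hypothesis wedge_vv : forall i, wedge (v i) (v i) = 0.
Implicit Types (a i s t : 'I_n) (A S T : {set 'I_n}).

Definition wedge_prod S : lam K n :=
  foldr (@wedge K n) (lam_one K n) [seq v j | j <- enum S].

Lemma wedge_prod0 : wedge_prod set0 = lam_one K n.
Proof. by rewrite /wedge_prod enum_set0. Qed.

Lemma wedge_prodU1_lt s A : (forall t, t \in A -> (s < t)%N) ->
  wedge_prod (s |: A) = wedge (v s) (wedge_prod A).
Proof. by move=> sA; rewrite /wedge_prod enum_setU1_lt. Qed.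

Lemma wedge_vec_prod A i :
  wedge (v i) (wedge_prod A) = lam_scale (wedge_sign [set i] A) (wedge_prod (i |: A)).
Proof.
elim/set_ord_min_ind: A i => [i|a A aA IH i].
  by rewrite setU0 wedge_sign0r lam_scale1 /wedge_prod enum_set1 enum_set0.
have aAd : [set a] :&: A = set0.
  apply/setP => t; rewrite !inE; case: eqP => // ->.
  by apply/negP => /aA; rewrite ltnn.
case: (ltngtP i a) => [ia|ai|/val_inj->].
- have iaA t : t \in a |: A -> (i < t)%N.
    by rewrite in_setU1 => /predU1P[->|/aA/(ltn_trans ia)].
  by rewrite wedge_sign_set1_lt // lam_scale1 (wedge_prodU1_lt iaA).
- have aiA t : t \in i |: A -> (a < t)%N by rewrite in_setU1 => /predU1P[->|/aA].
  have /negbTE ia : i != a by rewrite -val_eqE /= gtn_eqF.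
  rewrite (wedge_prodU1_lt aA) -wedgeA wedge_vC wedgeNl wedgeA IH wedgeZr.
  rewrite -(wedge_prodU1_lt aiA) setUCA wedge_signUr // wedge_sign_set1 ia ai.
  by rewrite mulN1r lam_scaleN.
- rewrite (wedge_prodU1_lt aA) -wedgeA wedge_vv wedge0l.
  by rewrite wedge_signUr // wedge_sign_set1 eqxx mul0r lam_scale0.
Qed.

Lemma wedge_prodM S T :
  wedge (wedge_prod S) (wedge_prod T) = lam_scale (wedge_sign S T) (wedge_prod (S :|: T)).
Proof.
elim/set_ord_min_ind: S => [|s S sS IH].
  by rewrite wedge_prod0 wedge1l wedge_sign0l lam_scale1 set0U.
rewrite (wedge_prodU1_lt sS) wedgeA IH wedgeZr wedge_vec_prod lam_scaleA -setUA.
have := wedge_sign_cocycle K [set s] S T.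
by rewrite wedge_sign_set1_lt // mul1r => ->.
Qed.

End WedgeProduct.

Section ExtN.
Variables (K : comNzRingType) (n : nat) (N : 'M[K]_n).
Implicit Types (x y : lam K n).

Lemma extN_wedge_prod x :
  extN N x = \sum_S lam_scale (x S) (wedge_prod (fun j => embed (fun i => N i j)) S).
Proof.
by apply/ffunP => U; rewrite ffunE sum_ffunE; apply: eq_bigr => S _; rewrite ffunE.
Qed.

Lemma extN0 : extN N 0 = 0.
Proof. by apply/ffunP => U; rewrite !ffunE big1 // => S _; rewrite ffunE mul0r. Qed.

Lemma extN_wedge x y : wedge (extN N x) (extN N y) = extN N (wedge x y).
Proof.
have wedge_colsC i j := wedge_embedC (fun k => N k i) (fun k => N k j).
have wedge_cols_self j := wedge_embed_self (fun k => N k j).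
rewrite !extN_wedge_prod wedge_suml.
under eq_bigr do rewrite wedge_sumr.
under eq_bigr do under eq_bigr do
  rewrite wedgeZl wedgeZr (wedge_prodM wedge_colsC wedge_cols_self) !lam_scaleA.
apply/ffunP => U; rewrite !sum_ffunE.
under eq_bigr do rewrite sum_ffunE.
transitivity (\sum_S \sum_T \sum_W (x S * y T * wedge_sign S T *
  wedge_prod (fun j => embed (fun i => N i j)) W U) * (S :|: T == W)%:R).
  apply: eq_bigr => S _; apply: eq_bigr => T _.
  by rewrite lam_scaleE sum_delta_sym; ring.
under eq_bigr do rewrite exchange_big.
rewrite exchange_big; apply: eq_bigr => W _.
rewrite lam_scaleE wedgeE mulr_suml; apply: eq_bigr => S _.
by rewrite mulr_suml; apply: eq_bigr => T _; ring.
Qed.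

End ExtN.

Definition map_lam (K K' : comNzRingType) n (f : K -> K') (x : lam K n) : lam K' n :=
  [ffun S => f (x S)].

Lemma map_lamE (K K' : comNzRingType) n (f : K -> K') (x : lam K n) S :
  map_lam f x S = f (x S).
Proof. by rewrite ffunE. Qed.

Lemma wedge_map (K K' : comNzRingType) n (f : {rmorphism K -> K'}) (x y : lam K n) :
  wedge (map_lam f x) (map_lam f y) = map_lam f (wedge x y).
Proof.
apply/ffunP => U; rewrite [RHS]ffunE !wedgeE rmorph_sum; apply: eq_bigr => S _.
rewrite rmorph_sum; apply: eq_bigr => T _.
rewrite !rmorphM rmorph_nat !ffunE; congr (_ * _ * _ * _).
by rewrite /wedge_sign; case: ifP; rewrite ?rmorph0 ?rmorphXn ?rmorphN1.
Qed.

Lemma map_lam0 (K K' : comNzRingType) n (f : {rmorphism K -> K'}) :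
  map_lam f (0 : lam K n) = 0.
Proof. by apply/ffunP => S; rewrite !ffunE rmorph0. Qed.

Lemma limit_of_wedge (F : fieldType) n (N : 'M[ratfun F]_n) (x x' z z' : lam F n) :
  wedge x x' = 0 -> limit_of N x z -> limit_of N x' z' -> wedge z z' = 0.
Proof.
move=> xx' [c [_ [p [cNx [_ ->]]]]] [c' [_ [p' [cNx' [_ ->]]]]].
pose lift (w : lam F n) := map_lam (@FracField.tofrac {poly F}) (map_lam (@polyC F) w).
have liftE (w : lam F n) : [ffun S => topoly F (w S)%:P] = lift w.
  by apply/ffunP => S; rewrite !ffunE.
have p_scale : map_lam (@FracField.tofrac {poly F}) p = lam_scale c (extN N (lift x)).
  by apply/ffunP => S; rewrite map_lamE lam_scaleE -cNx liftE.
have p'_scale : map_lam (@FracField.tofrac {poly F}) p' = lam_scale c' (extN N (lift x')).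
  by apply/ffunP => S; rewrite map_lamE lam_scaleE -cNx' liftE.
have lift_pp' : map_lam (@FracField.tofrac {poly F}) (wedge p p') = 0.
  rewrite -wedge_map p_scale p'_scale wedgeZl wedgeZr extN_wedge /= !wedge_map xx'.
  by rewrite !map_lam0 extN0 !lam_scaler0.
have pp' : wedge p p' = 0.
  apply/ffunP => S; move/ffunP: lift_pp' => /(_ S) /eqP.
  by rewrite !ffunE tofrac_eq0 => /eqP.
have evalE (q : {ffun {set 'I_n} -> {poly F}}) :
    [ffun S => (q S).[0]] = map_lam (horner_eval (0 : F)) q.
  by apply/ffunP => S; rewrite !ffunE.
by rewrite !evalE wedge_map pp' map_lam0.
Qed.

Lemma in_span_wedge (F : fieldType) n (P P' : lam F n -> Prop) (y y' : lam F n) :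
  (forall z z', P z -> P' z' -> wedge z z' = 0) ->
  in_span P y -> in_span P' y' -> wedge y y' = 0.
Proof.
move=> PP' [s [Ps ->]] [s' [Ps' ->]].
rewrite wedge_suml big_seq big1 // => q qs.
rewrite wedge_sumr big_seq big1 // => q' qs'.
rewrite -/(lam_scale q.1 q.2) -/(lam_scale q'.1 q'.2) wedgeZl wedgeZr.
by rewrite (PP' _ _ (Ps q qs) (Ps' q' qs')) !lam_scaler0.
Qed.

Theorem lemma2p6 (F : fieldType) (n : nat) (N : 'M[ratfun F]_n)
  (L L' : lam F n -> Prop) :
  N \in unitmx ->
  is_subspace L -> is_subspace L' ->
  (forall x x', L x -> L' x' -> wedge x x' = 0) ->
  forall y y', lim_space N L y -> lim_space N L' y' -> wedge y y' = 0.
Proof.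
move=> _ _ _ LL' y y'; apply: in_span_wedge => z z' [x [Lx _ xz]] [x' [Lx' _ xz']].
exact: limit_of_wedge (LL' x x' Lx Lx') xz xz'.
Qed.
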